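(* Let $\rho>0$. A probability measure $\nu$ on $(\mathcal{P}^{loc},\mathcal{F})$ is invariant for the $\mathbb{R}^+$-partitioning process $(\Pi^\rho_t;t\ge0)$ if and only if for every finite subset $z$ of $\mathbb{R}^+$, $\nu\circ\mathrm{Rest}_z^{-1}$ is invariant for $(\mathrm{Rest}_z(\Pi^\rho_t);t\ge0)$.
   Context: $\mathcal{P}^{loc}$ is the set of right-continuous (segments, i.e. maximal connected subsets of blocks, are left-closed right-open intervals) and locally finite (finitely many segments meet any compact set) partitions of $\mathbb{R}^+$; for finite $z$, $\mathrm{Rest}_z(\pi)$ is the partition of $z$ induced by $\pi$; $\mathcal{F}$ is the $\sigma$-field generated by the sets $\{\tilde\pi:\mathrm{Rest}_z(\tilde\pi)=\pi\}$ for finite $z\subset\mathbb{R}^+$ and partitions $\pi$ of $z$. For finite $z=\{z_0<\dots<z_n\}$, the ARG $\Gamma^{\rho,z}$ is the Markov chain on partitions of $z$ in which each pair of blocks merges at rate $1$, and each block $\{z_{i_1}<\dots<z_{i_k}\}$ splits into $\{z_{i_1},\dots,z_{i_j}\}$ and $\{z_{i_{j+1}},\dots,z_{i_k}\}$ at rate $\rho(z_{i_{j+1}}-z_{i_j})$. The $\mathbb{R}^+$-partitioning process $(\Pi^\rho_t)$ is the càdlàg process on $(\mathcal{P}^{loc},\mathcal{F})$ such that for each finite $z$, $(\mathrm{Rest}_z(\Pi^\rho_t))$ is the ARG $\Gamma^{\rho,z}$ started from $\mathrm{Rest}_z(\Pi^\rho_0)$. Invariance of $\nu$ means that if the initial state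 has law $\nu$ then the state at each time $t$ has law $\nu$. *)

From HB Require Import structures.
From mathcomp Require Import all_boot all_order all_algebra.
From mathcomp Require Import all_classical all_reals all_analysis.
Unset Implicit Arguments. Unset Strict Implicit. Unset Printing Implicit Defensive.
Import Order.TTheory GRing.Theory Num.Theory.
Import numFieldNormedType.Exports.
Local Open Scope classical_set_scope.
Local Open Scope ring_scope.

Section PartitionsOfRplus.
Variable R : realType.

(* A partition of R^+ = [0,+oo) is encoded by its equivalence relation
   (pi x y <-> x and y lie in the same block); pi is supported on R^+. *)
Definition equiv_Rplus (pi : R -> R -> Prop) : Prop :=
  [/\ (forall x y, pi x y -> 0 <= x),
      (forall x, 0 <= x -> pi x x),
      (forall x y, pi x y -> pi y x) &
      (forall x y w, pi x y -> pi y w -> pi x w)].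

Definition block (pi : R -> R -> Prop) (x : R) : set R := [set y | pi x y].

Definition segment (pi : R -> R -> Prop) (S : set R) : Prop :=
  [/\ S !=set0, (exists x, S `<=` block pi x), connected S &
      (forall S', (exists x, S' `<=` block pi x) -> connected S' ->
                  S `<=` S' -> S' = S)].

Definition right_continuous (pi : R -> R -> Prop) : Prop :=
  forall S, segment pi S ->
    exists a, (exists b, a < b /\ S = `[a, b[%classic) \/ S = `[a, +oo[%classic.

Definition locally_finite (pi : R -> R -> Prop) : Prop :=
  forall K : set R, compact K ->
    finite_set [set S | segment pi S /\ S `&` K !=set0].

Definition Ploc (pi : R -> R -> Prop) : Prop :=
  [/\ equiv_Rplus pi, right_continuous pi & locally_finite pi].

Definition pi_one : R -> R -> Prop := fun x y => 0 <= x /\ 0 <= y.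

Lemma Ploc_pi_one_seg S : segment pi_one S -> S = `[0, +oo[%classic.
Proof.
case=> [[x0 Sx0] [x Sx] _ Smax].
have hx : 0 <= x by have [] := Sx x0 Sx0.
symmetry; apply: Smax.
- exists 0 => y /=; rewrite in_itv /= andbT => hy; by split.
- by apply/connected_intervalP; exact: interval_is_interval.
- by move=> y /Sx [_ hy] /=; rewrite in_itv /= andbT.
Qed.

Lemma Ploc_pi_one : Ploc pi_one.
Proof.
split.
- split.
  + by move=> x y [].
  + by move=> x hx; split.
  + by move=> x y [].
  + by move=> x y w [hx _] [_ hw].
- by move=> S /Ploc_pi_one_seg ->; exists 0; right.
- move=> K _; apply: (@sub_finite_set _ _ [set `[0, +oo[%classic]);
    last exact: finite_set1.
  by move=> S [/Ploc_pi_one_seg -> _].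
Qed.


Definition Ploc_type : Type := {p : R -> R -> Prop | Ploc p}.
HB.instance Definition _ := gen_eqMixin Ploc_type.
HB.instance Definition _ := gen_choiceMixin Ploc_type.
HB.instance Definition _ :=
  isPointed.Build Ploc_type (exist _ pi_one Ploc_pi_one).

(* A finite subset z = {z_0 < ... < z_(n-1)} of R^+ is encoded by the strictly
   increasing sequence s of its elements; its points are indexed by 'I_(size s). *)
Definition finite_Rplus (s : seq R) : Prop :=
  sorted <%R s /\ all (fun x => 0 <= x) s.

Definition Rest (s : seq R) (pi : Ploc_type) : {set {set 'I_(size s)}} :=
  ([set [set j : 'I_(size s) | `[< proj1_sig pi (nth 0 s i) (nth 0 s j) >]]
     | i : 'I_(size s)])%SET.

Definition cylinders : set (set Ploc_type) :=
  [set A | exists s, finite_Rplus s /\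
     exists sigma : {set {set 'I_(size s)}}, A = [set x | Rest s x = sigma]].

Definition Ploc_space := g_sigma_algebraType cylinders.

Section ARG.
Variables (rho : R) (s : seq R).
Local Notation n := (size s).
Local Notation state := {set {set 'I_n}}.

(* total rate of jumping from P to P' : merges of unordered pairs of distinct
   blocks (rate 1 each) and splits of a block {i_1<..<i_k} between consecutive
   elements a = i_j, b = i_(j+1) (rate rho (z_b - z_a) each) *)
Definition arg_rate (P P' : state) : R :=
  \sum_(E in powerset P | #|E| == 2%N)
      (P' == ((P :\: E) :|: [set finset.cover E])%SET)%:R
  + \sum_(B in P) \sum_(a : 'I_n) \sum_(b : 'I_n |
        [&& a \in B, b \in B, (a < b)%N &
            [forall c in B, ~~ ((a < c)%N && (c < b)%N)]])
      ((P' == ((P :\ B) :|: [set [set i in B | (i <= a)%N];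
                                  [set i in B | (b <= i)%N]])%SET)%:R
       * (rho * (nth 0 s b - nth 0 s a))).

Definition arg_gen (P P' : state) : R :=
  if P == P' then - \sum_(P'' : state | P'' != P) arg_rate P P''
  else arg_rate P P'.

Fixpoint arg_gen_pow (k : nat) (P P' : state) : R :=
  match k with
  | 0%N => (P == P')%:R
  | k.+1 => \sum_(W : state) arg_gen_pow k P W * arg_gen W P'
  end.

Definition arg_trans (t : R) (P P' : state) : R :=
  \big[+%R/0%R]_(0 <= k <oo) (t ^+ k / (k`!)%:R * arg_gen_pow k P P').

Definition arg_invariant (mu : state -> R) : Prop :=
  forall t, 0 <= t -> forall sigma : state,
    \sum_(tau : state) mu tau * arg_trans t tau sigma = mu sigma.

End ARG.

Definition marginal (s : seq R) (nu : probability Ploc_space R)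
  (sigma : {set {set 'I_(size s)}}) : R :=
  fine (nu [set x | Rest s x = sigma]).

(* [law nu t] is the law of Pi^rho_t when Pi^rho_0 has law nu: for every finite z,
   Rest_z(Pi^rho_t) is the ARG Gamma^{rho,z} started from Rest_z(Pi^rho_0). *)
Definition partitioning_law (rho : R)
    (law : probability Ploc_space R -> R -> probability Ploc_space R) : Prop :=
  forall nu t, 0 <= t -> forall s, finite_Rplus s ->
    forall sigma : {set {set 'I_(size s)}},
      law nu t [set x | Rest s x = sigma]
      = (\sum_(tau : {set {set 'I_(size s)}})
           marginal s nu tau * arg_trans rho s t tau sigma)%:E.

Definition partitioning_invariant
    (law : probability Ploc_space R -> R -> probability Ploc_space R)
    (nu : probability Ploc_space R) : Prop :=
  forall t, 0 <= t -> forall A : set Ploc_space, measurable A ->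
    law nu t A = nu A.

End PartitionsOfRplus.

From HB Require Import structures.
From mathcomp Require Import all_boot all_order all_algebra.
From mathcomp Require Import all_classical all_reals all_analysis.
Import Order.TTheory GRing.Theory Num.Theory.
Local Open Scope classical_set_scope.
Local Open Scope ring_scope.

(* If z is contained in u, then Rest_z is a function of Rest_u;
   since any two finite subsets of R^+ lie in a common one, the events
   {Rest_z \in S} (z finite, S a set of partitions of z) form a pi-system.  It
   generates F, so by Dynkin's theorem a finite measure on (P^loc, F) is
   determined by its finite-dimensional marginals nu o Rest_z^-1.  The marginals
   of the law of Pi_t are those of nu pushed by the ARG semigroups, hence the
   law of Pi_t is nu exactly when every marginal of nu is ARG-invariant. *)

Section FiniteDimensionalMarginals.
Variable R : realType.
Implicit Types s u : seq R.

Lemma Rest_factor s u : all (fun x => 0 <= x) s -> {subset s <= u} ->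
  exists f : {set {set 'I_(size u)}} -> {set {set 'I_(size s)}},
    forall x, Rest R s x = f (Rest R u x).
Proof.
move=> /allP s_ge0 su.
have s_in_u (i : 'I_(size s)) : nth 0 s i \in u by apply/su/mem_nth.
have m_lt (i : 'I_(size s)) : (index (nth 0%R s i) u < size u)%N.
  by rewrite index_mem s_in_u.
pose m i : 'I_(size u) := Ordinal (m_lt i).
have nth_m i : nth 0 u (m i) = nth 0 s i by rewrite nth_index ?s_in_u.
exists (fun P : {set {set 'I_(size u)}} =>
  [set [set j | [exists B in P, (m i \in B) && (m j \in B)]] | i : 'I_(size s)])%SET.
move=> x.
rewrite /Rest; apply: eq_imset => i; apply/setP => j; rewrite !inE.
case: x => p [[_ p_refl p_sym p_trans] _ _] /=.
apply/asboolP/existsP => [pij|[_ /and3P[/imsetP[k _ ->]]]]; last first.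
  rewrite !inE !nth_m => /asboolP pki /asboolP pkj.
  exact: p_trans (p_sym _ _ (asboolW pki)) (asboolW pkj).
exists [set k : 'I_(size u) | `[< p (nth 0 u (m i)) (nth 0 u k) >]]%SET.
rewrite !inE !nth_m; apply/and3P; split; last exact/asboolP.
- by apply/imsetP; exists (m i); rewrite ?nth_m.
- by apply/asboolP/p_refl/s_ge0/mem_nth.
Qed.

Lemma finite_Rplus_common_superset s s' : finite_Rplus R s -> finite_Rplus R s' ->
  exists2 u, finite_Rplus R u & {subset s <= u} /\ {subset s' <= u}.
Proof.
move=> [_ /allP s_ge0] [_ /allP s'_ge0]; exists (sort <=%O (undup (s ++ s'))).
  split; first by rewrite sort_lt_sorted undup_uniq.
  apply/allP => x; rewrite mem_sort mem_undup mem_cat.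
  by case/orP; [exact: s_ge0 | exact: s'_ge0].
by split=> x xs; rewrite mem_sort mem_undup mem_cat xs ?orbT.
Qed.

Definition cylinder s (S : {set {set {set 'I_(size s)}}}) : set (Ploc_space R) :=
  [set x | Rest R s x \in S].

Definition finite_cylinders : set (set (Ploc_space R)) :=
  [set A | exists s, finite_Rplus R s /\ exists S, A = cylinder s S].

Lemma cylinder_bigcup s S :
  cylinder s S = \bigcup_(sigma in [set` S]) [set x | Rest R s x = sigma].
Proof.
apply/seteqP; split=> x; rewrite /cylinder /=; last by case=> sigma Ssigma ->.
by exists (Rest R s x).
Qed.

Lemma measurable_Rest_eq s sigma : finite_Rplus R s ->
  measurable [set x : Ploc_space R | Rest R s x = sigma].
Proof. by move=> zs; apply: sub_sigma_algebra; exists s; split => //; exists sigma. Qed.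

Lemma finite_cylinders_measurable : finite_cylinders `<=` measurable.
Proof.
move=> _ [s [zs [S ->]]]; rewrite cylinder_bigcup.
apply: fin_bigcup_measurable; first exact: finite_finset.
by move=> sigma _; exact: measurable_Rest_eq.
Qed.

Lemma finite_cylinders_setT : finite_cylinders setT.
Proof.
exists [::]; split; first by [].
by exists [set: {set {set 'I_0}}]%SET; apply/seteqP; split=> x; rewrite /cylinder /= inE.
Qed.

Lemma finite_cylinders_setI : setI_closed finite_cylinders.
Proof.
move=> _ _ [s [zs [S ->]]] [s' [zs' [S' ->]]].
have [u zu [su s'u]] := finite_Rplus_common_superset _ _ zs zs'.
have [f Rest_s] := Rest_factor _ _ zs.2 su.
have [f' Rest_s'] := Rest_factor _ _ zs'.2 s'u.
exists u; split => //; exists [set P | (f P \in S) && (f' P \in S')]%SET.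
by apply/seteqP; split=> x; rewrite /cylinder /= inE -Rest_s -Rest_s' => /andP.
Qed.

Lemma measurable_sub_finite_cylinders :
  measurable `<=` <<s finite_cylinders >>.
Proof.
apply: smallest_sub; first exact: smallest_sigma_algebra.
move=> _ [s [zs [sigma ->]]]; apply: sub_sigma_algebra.
exists s; split => //; exists [set sigma]%SET.
by apply/seteqP; split=> x; rewrite /cylinder /= inE => /eqP.
Qed.

Section Uniqueness.
Variables m1 m2 : {finite_measure set (Ploc_space R) -> \bar R}.
Hypothesis m1m2_marginals : forall s, finite_Rplus R s -> forall sigma,
  m1 [set x | Rest R s x = sigma] = m2 [set x | Rest R s x = sigma].

Lemma finite_cylinders_measure_eq A : finite_cylinders A -> m1 A = m2 A.
Proof.
move=> [s [zs [S ->]]]; rewrite cylinder_bigcup.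
have Rest_fibers_disj : trivIset [set` S]
    (fun sigma => [set x : Ploc_space R | Rest R s x = sigma]).
  by move=> ? ? _ _ [x [/= <- <-]].
have measurable_fibers sigma : [set` S] sigma ->
    measurable [set x : Ploc_space R | Rest R s x = sigma].
  by move=> _; exact: measurable_Rest_eq.
rewrite !measure_fin_bigcup //; try exact: finite_finset.
by apply: eq_fsbigr => sigma _; exact: m1m2_marginals.
Qed.

Lemma finite_measure_eq_Rest A : measurable A -> m1 A = m2 A.
Proof.
move=> mA; apply: (g_sigma_algebra_measure_unique _
  finite_cylinders_measurable (fun _ => setT)).
- by move=> _; exact: finite_cylinders_setT.
- by rewrite bigcup_const.
- exact: finite_cylinders_setI.
- exact: finite_cylinders_measure_eq.
- by move=> _; apply: fin_num_fun_lty; exact: fin_num_measure.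
- exact: measurable_sub_finite_cylinders.
Qed.

End Uniqueness.

Lemma marginalE (nu : probability (Ploc_space R) R) s sigma : finite_Rplus R s ->
  nu [set x | Rest R s x = sigma] = (marginal R s nu sigma)%:E.
Proof. by move=> zs; rewrite fineK // fin_num_measure //; exact: measurable_Rest_eq. Qed.

End FiniteDimensionalMarginals.

Theorem lemma1 (R : realType) (rho : R) (hrho : 0 < rho)
  (law : probability (Ploc_space R) R -> R -> probability (Ploc_space R) R)
  (hlaw : partitioning_law R rho law)
  (nu : probability (Ploc_space R) R) :
  partitioning_invariant R law nu <->
  (forall s : seq R, finite_Rplus R s ->
     arg_invariant R rho s (marginal R s nu)).
Proof.
split=> [nu_inv s zs t t_ge0 sigma | marg_inv t t_ge0].
- have := nu_inv t t_ge0 _ (measurable_Rest_eq _ _ sigma zs).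
  by rewrite hlaw // marginalE // => -[].
- apply: finite_measure_eq_Rest => s zs sigma /=.
  by rewrite hlaw // marginalE // marg_inv.
Qed.
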